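(* Let $A$ be a non-reduced Abelian group. Then $\mathrm{End}\,A$ is centrally essential if and only if $\mathrm{End}\,A$ is commutative.
   Context: All rings are associative with non-zero identity. A ring $R$ is centrally essential if for every non-zero $a\in R$ there exist non-zero elements $x,y$ of the center of $R$ with $ax=y$. An Abelian group is non-reduced if it contains a non-zero divisible subgroup. *)

(* An Abelian group is a zmodType A; End A is the ring of
   additive maps A -> A, with addition pointwise and multiplication given by
   composition (f * g := f \o g). Elements of End A are compared extensionally. *)
From mathcomp Require Import all_boot all_algebra.
Set Implicit Arguments. Unset Strict Implicit. Unset Printing Implicit Defensive.
Import GRing.Theory.
Local Open Scope ring_scope.

Section EndDefs.
Variable A : zmodType.

Definition is_endo (f : A -> A) : Prop := forall x y : A, f (x - y) = f x - f y.

Definition endo_nonzero (f : A -> A) : Prop := exists x : A, f x <> 0.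

Definition endo_mul (f g : A -> A) : A -> A := fun x => f (g x).

Definition endo_central (c : A -> A) : Prop :=
  is_endo c /\ forall g : A -> A, is_endo g ->
    forall x : A, endo_mul c g x = endo_mul g c x.

Definition End_centrally_essential : Prop :=
  forall a : A -> A, is_endo a -> endo_nonzero a ->
    exists x y : A -> A,
      [/\ endo_central x, endo_nonzero x, endo_central y, endo_nonzero y &
          forall z : A, endo_mul a x z = y z].

Definition End_commutative : Prop :=
  forall f g : A -> A, is_endo f -> is_endo g ->
    forall z : A, endo_mul f g z = endo_mul g f z.

Definition is_subgroup (D : A -> Prop) : Prop :=
  D 0 /\ forall x y : A, D x -> D y -> D (x - y).

Definition is_divisible_subgroup (D : A -> Prop) : Prop :=
  is_subgroup D /\
  forall (d : A) (n : nat), D d -> (0 < n)%N -> exists e : A, D e /\ e *+ n = d.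

Definition non_reduced : Prop :=
  exists D : A -> Prop, is_divisible_subgroup D /\ exists d : A, D d /\ d <> 0.

End EndDefs.

From HB Require Import structures.
From mathcomp Require Import all_boot all_algebra.
From mathcomp Require Import boolp classical_sets.
Set Implicit Arguments. Unset Strict Implicit. Unset Printing Implicit Defensive.
Import GRing.Theory.
Local Open Scope ring_scope.

(* Idempotents of a centrally essential ring are central, so every direct summand of A
   has a central projection and no nonzero homomorphism runs between the summand and its
   complement.  Divisible subgroups and bounded pure cyclic subgroups are summands (Zorn).
   A nonzero divisible subgroup contains a rank-one divisible subgroup U, isomorphic to Q
   or to a Pruefer group; its complement must be torsion, and endomorphisms commute on U
   because U has rank one.  At a q-primary element t, either some element of order q has
   finite height, and the resulting cyclic summand contains the whole q-primary part, or
   that part is divisible and t lies in a Pruefer summand whose elements of the order of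
   t are the multiples of t.  Either way every endomorphism maps t into Z t, so any two
   commute at t.  The converse direction takes x = 1. *)

Lemma ex_last_true (P : nat -> Prop) n : P 0%N -> ~ P n -> exists i, P i /\ ~ P i.+1.
Proof.
move=> P0; elim: n => [//|n IH] nPn.
by have [Pn|nPn'] := pselect (P n); [exists n | apply: IH].
Qed.

Lemma prime_coprimez_expn (p k : nat) (m : int) :
  prime p -> ~~ (p%:Z %| m)%Z -> coprimez m (p ^ k)%N.
Proof. by move=> pp ndvd; rewrite coprimezE coprimeXr // coprime_sym prime_coprime. Qed.

Lemma subrACA (V : zmodType) (x y z t : V) : (x - y) - (z - t) = (x - z) - (y - t).
Proof. by rewrite !opprD !opprK addrACA. Qed.

Lemma mulrnzAC (V : zmodType) (x : V) (n : nat) (m : int) : x *+ n *~ m = x *~ m *+ n.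
Proof. by rewrite !pmulrn mulrzAC. Qed.

Section Endomorphisms.
Variable A : zmodType.
Implicit Types (f g h e : A -> A) (x y : A).

Definition endo_additive f (hf : is_endo f) : {additive A -> A} :=
  HB.pack f (GRing.isZmodMorphism.Build A A f hf).

Lemma endo0 f : is_endo f -> f 0 = 0.
Proof. by move=> hf; apply: (raddf0 (endo_additive hf)). Qed.

Lemma endoD f : is_endo f -> {morph f : x y / x + y}.
Proof. by move=> hf; apply: (raddfD (endo_additive hf)). Qed.

Lemma endoMn f : is_endo f -> forall x n, f (x *+ n) = f x *+ n.
Proof. by move=> hf x n; apply: (raddfMn (endo_additive hf)). Qed.

Lemma endoMz f : is_endo f -> forall x m, f (x *~ m) = f x *~ m.
Proof. by move=> hf x m; apply: (raddfMz (endo_additive hf)). Qed.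

Lemma endo_comp f g : is_endo f -> is_endo g -> is_endo (endo_mul f g).
Proof. by move=> hf hg x y; rewrite /endo_mul hg hf. Qed.

Lemma endo_sub f g : is_endo f -> is_endo g -> is_endo (fun x => f x - g x).
Proof. by move=> hf hg x y; rewrite hf hg !opprD addrACA. Qed.

Lemma commute_mulrz f g x : is_endo f -> is_endo g ->
  f (g x) = g (f x) -> forall m, f (g (x *~ m)) = g (f (x *~ m)).
Proof. by move=> hf hg fgx m; rewrite !(endoMz hf, endoMz hg) fgx. Qed.

Lemma commute_eigen f g x (a b : int) : is_endo f -> is_endo g ->
  f x = x *~ a -> g x = x *~ b -> f (g x) = g (f x).
Proof.
by move=> hf hg fx gx; rewrite gx fx (endoMz hf) (endoMz hg) fx gx mulrzAC.
Qed.

Lemma commutator_mulrz f g c u (m0 m1 m2 : int) :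
  is_endo f -> is_endo g -> u = c *~ m0 -> f u = c *~ m1 -> g u = c *~ m2 ->
  (f (g u) - g (f u)) *~ m0 = 0.
Proof.
move=> hf hg uE fu gu.
have gm : g u *~ m0 = u *~ m2 by rewrite gu uE mulrzAC.
have fm : f u *~ m0 = u *~ m1 by rewrite fu uE mulrzAC.
rewrite mulrzBl -(endoMz hf (g u)) -(endoMz hg (f u)) gm fm.
by rewrite (endoMz hf) (endoMz hg) fu gu mulrzAC subrr.
Qed.

End Endomorphisms.

Section Subgroups.
Variables (A : zmodType) (S : A -> Prop).
Hypothesis hS : is_subgroup S.

Lemma subgroup0 : S 0. Proof. by case: hS. Qed.

Lemma subgroupB x y : S x -> S y -> S (x - y). Proof. by case: hS => _; apply. Qed.

Lemma subgroupN x : S x -> S (- x).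
Proof. by move=> Sx; rewrite -sub0r; apply: subgroupB => //; apply: subgroup0. Qed.

Lemma subgroupD x y : S x -> S y -> S (x + y).
Proof. by move=> Sx Sy; rewrite -[y]opprK; apply/subgroupB/subgroupN. Qed.

Lemma subgroupMn x n : S x -> S (x *+ n).
Proof.
move=> Sx; elim: n => [|n IH]; first by rewrite mulr0n; apply: subgroup0.
by rewrite mulrS; apply: subgroupD.
Qed.

Lemma subgroupMz x m : S x -> S (x *~ m).
Proof.
move=> Sx; case: m => n; first by rewrite -pmulrn; apply: subgroupMn.
by rewrite NegzE mulrNz -pmulrn; apply/subgroupN/subgroupMn.
Qed.

End Subgroups.

Section SpecialSubgroups.
Variable A : zmodType.
Implicit Types (x u : A).

Lemma zero_subgroup : is_subgroup (fun x : A => x = 0).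
Proof. by split=> // x y -> ->; rewrite subrr. Qed.

Definition multiple_of (u : A) x := exists m : int, x = u *~ m.

Lemma multiple_of_subgroup u : is_subgroup (multiple_of u).
Proof.
by split=> [|_ _ [m ->] [m' ->]]; [exists 0 | exists (m - m'); rewrite mulrzBr].
Qed.

Definition divisible_by (k : nat) (z : A) := exists w, z = w *+ k.

Lemma divisible_by_subgroup k : is_subgroup (divisible_by k).
Proof.
split=> [|_ _ [w ->] [w' ->]]; first by exists 0; rewrite mul0rn.
by exists (w - w'); rewrite mulrnBl.
Qed.

End SpecialSubgroups.

Section Multiples.
Variable A : zmodType.
Implicit Types x : A.

Lemma mulrz_bezout x (u m v n : int) :
  u * m + v * n = 1 -> x = x *~ m *~ u + x *~ n *~ v.
Proof. by move=> uv; rewrite -!mulrzA [m * u]mulrC [n * v]mulrC -mulrzDr uv mulr1z. Qed.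

Lemma mulrz_coprime_eq0 x (m : int) (n : nat) :
  x *+ n = 0 -> coprimez m n -> x *~ m = 0 -> x = 0.
Proof.
move=> xn /coprimezP [[u v] /= uv] xm.
by rewrite (mulrz_bezout x uv) xm -pmulrn xn !mul0rz addr0.
Qed.

Lemma coprime_divisible x (p n : nat) :
  x *+ n = 0 -> coprime p n -> exists u : int, x *~ u *+ p = x.
Proof.
move=> xn pn; have /coprimezP [[u v] /= uv] : coprimez p n by [].
exists u; rewrite [RHS](mulrz_bezout x uv) -[x *~ n]pmulrn xn mul0rz addr0.
by rewrite pmulrn mulrzAC.
Qed.

Lemma prime_dvdz_annihilator (q k : nat) x (m : int) : prime q ->
  x *+ q ^ k = 0 -> x != 0 -> x *~ m = 0 -> (q%:Z %| m)%Z.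
Proof.
move=> qp xq x0 xm; apply: contraNT x0 => ndvd.
by rewrite (mulrz_coprime_eq0 xq _ xm) //; apply: prime_coprimez_expn.
Qed.

Lemma exact_order_dvdz (q n : nat) x (m : int) : prime q ->
  x *+ q ^ n.+1 = 0 -> x *+ q ^ n != 0 -> x *~ m = 0 -> ((q ^ n.+1)%N%:Z %| m)%Z.
Proof.
move=> qp; elim: n x m => [|n IH] x m xq xq' xm.
  by rewrite expn1; apply: prime_dvdz_annihilator qp xq _ xm; rewrite expn0 mulr1n in xq'.
have x0 : x != 0 by apply: contraNneq xq' => ->; rewrite mul0rn.
have /dvdzP [m' mE] := prime_dvdz_annihilator qp xq x0 xm.
have xqm : (x *+ q) *~ m' = 0 by rewrite pmulrn -mulrzA mulrC -mE.
have := IH _ _ _ _ xqm; rewrite -!mulrnA -!expnS => /(_ xq xq').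
by rewrite mE [(q ^ n.+2)%N]expnSr PoszM dvdz_mul2r // eqz_nat -lt0n prime_gt0.
Qed.

Definition torsion x := exists2 n, (0 < n)%N & x *+ n = 0.

Definition primary (q : nat) x := exists i, x *+ q ^ i = 0.

Lemma torsion_mulrz x (m : int) : x *~ m = 0 -> m != 0 -> torsion x.
Proof.
move=> xm m0; exists `|m|%N; first by rewrite absz_gt0.
by rewrite pmulrn abszEsg mulrC mulrzA xm mul0rz.
Qed.

Lemma torsion_primary_ind (P : A -> Prop) :
  (forall x y, P x -> P y -> P (x + y)) ->
  (forall q x, prime q -> primary q x -> P x) ->
  forall t, torsion t -> P t.
Proof.
move=> PD Pprim t [n]; elim/ltn_ind: n t => n IH t n0 tn.
have [n1|n1] := leqP n 1.
  have -> : t = 0 by move: tn; rewrite (@anti_leq n 1) ?n1 // mulr1n.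
  by apply: (Pprim 2%N) => //; exists 0%N.
have pp := pdiv_prime n1; set p := pdiv n in pp.
have [m cop nE] := pfactor_coprime pp n0; set a := logn p n in nE.
have [m1E|m1] := eqVneq m 1%N.
  by apply: (Pprim p) => //; exists a; rewrite -tn nE m1E mul1n.
have m0 : (0 < m)%N by move: n0; rewrite nE muln_gt0 => /andP[].
have pa1 : (1 < p ^ a)%N.
  by rewrite -{1}(expn0 p) ltn_exp2l ?prime_gt1 // logn_gt0 mem_primes pp n0 pdiv_dvd.
have /coprimezP [[u v] /= uv] : coprimez (p ^ a)%N m by rewrite coprimezE coprimeXl.
have killed k l (w : int) : k%:Z * l%:Z = n -> t *~ k *~ w *+ l = 0.
  by move=> kl; rewrite pmulrn mulrzAC -(mulrzA t) kl -pmulrn tn mul0rz.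
rewrite (mulrz_bezout t uv); apply: PD.
  apply: (IH m); rewrite ?nE ?ltn_Pmulr //.
  by apply: killed; rewrite nE PoszM mulrC.
apply: (IH (p ^ a)%N); rewrite ?nE ?ltn_Pmull ?expn_gt0 ?prime_gt0 //.
  by rewrite ltn_neqAle eq_sym m1.
by apply: killed; rewrite nE PoszM.
Qed.

Lemma primary_subgroup q : is_subgroup (primary q).
Proof.
split=> [|x y [i xi] [j yj]]; first by exists 0%N; rewrite mul0rn.
by exists (i + j)%N; rewrite mulrnBl expnD !mulrnA xi mulrnAC yj !mul0rn subrr.
Qed.

Lemma primary_root q :
  (forall x, x *+ q = 0 -> forall n, exists y, x = y *+ q ^ n) ->
  forall z, primary q z -> exists w, primary q w /\ w *+ q = z.
Proof.
move=> high z [k]; elim: k z => [|k IH] z zk.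
  by exists 0; split; [exists 0%N | move: zk; rewrite expn0 mulr1n mul0rn].
have zk' : z *+ q ^ k *+ q = 0 by rewrite -mulrnA -expnSr.
have [w0 w0E] := high _ zk' k.+1.
have [|w1 [w1P w1E]] := IH (z - w0 *+ q).
  by rewrite mulrnBl -mulrnA -expnS -w0E subrr.
exists (w0 + w1); split; last by rewrite mulrnDl w1E addrC subrK.
apply: (subgroupD (primary_subgroup q)) w1P.
by exists k.+2; rewrite expnSr mulrnA -w0E -mulrnA -expnSr zk.
Qed.

End Multiples.

Section Central.
Variable A : zmodType.
Implicit Types (e h : A -> A) (S : A -> Prop) (x u z : A).

Lemma central_commute e h : endo_central e -> is_endo h -> forall x, e (h x) = h (e x).
Proof. by case=> _ ce hh; apply: ce. Qed.

Lemma central_image_stable e S h : endo_central e -> (forall x, S (e x)) ->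
  (forall x, S x -> e x = x) -> is_endo h -> forall x, S x -> S (h x).
Proof. by move=> ce eS eid hh x Sx; rewrite -(eid x Sx) -(central_commute ce hh). Qed.

(* [a |-> z *~ c], where [e a = u *~ c], is an endomorphism, so it commutes with [e]. *)
Lemma central_fix_cyclic e u z : endo_central e -> (forall x, multiple_of u (e x)) ->
  e u = u -> (forall m, u *~ m = 0 -> z *~ m = 0) -> e z = z.
Proof.
move=> ce eu euu ann; have he : is_endo e by case: ce.
pose c x := sval (cid (eu x)).
have cE x : e x = u *~ c x := svalP (cid (eu x)).
have wd m1 m2 : u *~ m1 = u *~ m2 -> z *~ m1 = z *~ m2.
  by move=> um; apply/eqP; rewrite -subr_eq0 -mulrzBr ann // mulrzBr um subrr.
pose psi x := z *~ c x.
have hpsi : is_endo psi.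
  by move=> x y; rewrite /psi -mulrzBr; apply: wd; rewrite mulrzBr -!cE; apply: he.
have psiu : psi u = z by rewrite /psi -[RHS]mulr1z; apply: wd; rewrite -cE euu mulr1z.
by have := central_commute ce hpsi u; rewrite euu psiu.
Qed.

End Central.

Section Projections.
Variable A : zmodType.
Implicit Types (S C B : A -> Prop) (x y : A).

Definition trivial_meet S C := forall x, S x -> C x -> x = 0.

(* The purity needed for a maximal subgroup containing [C0] and meeting [S] trivially to
   be a complement of [S]. *)
Definition rel_divisible S C0 :=
  forall C, is_subgroup C -> (C0 `<=` C)%classic -> trivial_meet S C ->
  forall (p : nat) b s, prime p -> S s -> C (b *+ p - s) ->
  exists2 s', S s' & s' *+ p = s.

Lemma maximal_complement S C0 : is_subgroup C0 -> trivial_meet S C0 ->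
  exists C, [/\ is_subgroup C, (C0 `<=` C)%classic, trivial_meet S C &
    forall B, is_subgroup B -> (C `<=` B)%classic -> trivial_meet S B ->
      (B `<=` C)%classic].
Proof.
move=> hC0 SC0.
pose good X := [/\ is_subgroup X, (C0 `<=` X)%classic & trivial_meet S X].
have [C [[C_0|[hC C0C SC]] Cmax]] :
    exists C, (C = set0 \/ good C) /\ forall B, (C `<` B)%classic -> ~ (B = set0 \/ good B).
  apply: Zorn_bigcup => F FP Ftot.
  have goodF X x : F X -> X x -> good X.
    by move=> FX Xx; case: (FP X FX) => // X0; rewrite X0 in Xx.
  have [[X0 FX0 [x0 X0x0]]|F0] := pselect (exists2 X, F X & exists x, X x); last first.
    by left; apply/seteqP; split=> // x [X FX Xx]; apply: F0; exists X => //; exists x.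
  have [hX0 C0X0 _] := goodF _ _ FX0 X0x0.
  right; split; first split.
  - by exists X0 => //; apply: subgroup0.
  - move=> x y [X1 FX1 X1x] [X2 FX2 X2y].
    have [s12|s21] := Ftot X1 X2 FX1 FX2.
    + have [hX2 _ _] := goodF _ _ FX2 X2y.
      by exists X2 => //; apply: (subgroupB hX2) => //; apply: s12.
    + have [hX1 _ _] := goodF _ _ FX1 X1x.
      by exists X1 => //; apply: (subgroupB hX1) => //; apply: s21.
  - by move=> x C0x; exists X0 => //; apply: C0X0.
  - by move=> x Sx [X FX Xx]; case: (goodF _ _ FX Xx) => _ _; apply.
- exfalso; apply: (Cmax C0); last by right; rewrite /good; split.
  by rewrite C_0; split=> // /(_ 0 (subgroup0 hC0)).
exists C; split=> // B hB CB SB x Bx; apply: contrapT => nCx.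
apply: (Cmax B); last by right; split=> //; exact: subset_trans C0C CB.
by split=> // BC; exact/nCx/BC.
Qed.

Section MaximalComplement.
Variables S C : A -> Prop.
Hypotheses (hS : is_subgroup S) (hC : is_subgroup C) (SC : trivial_meet S C).
Hypothesis Cmax : forall B, is_subgroup B -> (C `<=` B)%classic -> trivial_meet S B ->
  (B `<=` C)%classic.

Definition in_sum x := exists2 s, S s & C (x - s).

Lemma in_sum_subgroup : is_subgroup in_sum.
Proof.
split; first by exists 0; rewrite ?subrr; apply: subgroup0.
move=> x y [s Ss Cx] [t St Cy]; exists (s - t); first exact: subgroupB.
by rewrite subrACA; apply: subgroupB.
Qed.

Lemma maximal_adjoin b : ~ in_sum b ->
  exists c m, [/\ C c, S (c + b *~ m) & c + b *~ m <> 0].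
Proof.
move=> nb; apply: contrapT => nS; apply: nb; exists 0; first exact: subgroup0.
rewrite subr0.
pose B x := exists c m, C c /\ x = c + b *~ m.
have hB : is_subgroup B.
  split; first by exists 0, 0; rewrite mulr0z addr0; split=> //; apply: subgroup0.
  move=> _ _ [c [m [Cc ->]]] [c' [m' [Cc' ->]]]; exists (c - c'), (m - m').
  by rewrite mulrzBr opprD addrACA; split=> //; apply: subgroupB.
apply: (Cmax hB) => [x Cx | x Sx [c [m [Cc xE]]] | ].
- by exists x, 0; rewrite mulr0z addr0.
- by apply: contrapT => x0; apply: nS; exists c, m; rewrite -xE.
- by exists 0, 1; rewrite add0r mulr1z; split=> //; apply: subgroup0.
Qed.

Lemma in_sum_multiple b : ~ in_sum b -> exists2 k, (0 < k)%N & in_sum (b *+ k).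
Proof.
move=> nb; have [c [m [Cc Sx x0]]] := maximal_adjoin nb.
exists `|m|%N.
  rewrite absz_gt0; apply/eqP => m0; apply: x0.
  by move: Sx; rewrite m0 mulr0z addr0 => Sc; apply: SC.
rewrite pmulrn abszEsg mulrC mulrzA; apply: (subgroupMz in_sum_subgroup).
exists (c + b *~ m) => //.
by rewrite (addrC c) opprD addrA subrr sub0r; apply: subgroupN.
Qed.

Lemma in_sum_prime_multiple b k : (0 < k)%N -> ~ in_sum b -> in_sum (b *+ k) ->
  exists p b', [/\ prime p, ~ in_sum b' & in_sum (b' *+ p)].
Proof.
elim/ltn_ind: k b => k IH b k0 nb bk.
have [k1|k1] := leqP k 1.
  by move: bk; rewrite (@anti_leq k 1) ?k1 // mulr1n.
have pp := pdiv_prime k1; set p := pdiv k in pp.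
have kE : k = (k %/ p * p)%N by rewrite divnK // pdiv_dvd.
have [bk'|nbk'] := pselect (in_sum (b *+ (k %/ p))).
  apply: (IH (k %/ p)%N) bk' => //; first by rewrite ltn_Pdiv // prime_gt1.
  by rewrite divn_gt0 ?prime_gt0 // pdiv_leq // ltnW.
by exists p, (b *+ (k %/ p)); split=> //; rewrite -mulrnA -kE.
Qed.

Lemma in_sum_full :
  (forall (p : nat) b s, prime p -> S s -> C (b *+ p - s) ->
    exists2 s', S s' & s' *+ p = s) ->
  forall a, in_sum a.
Proof.
move=> Sdiv a; apply: contrapT => na.
have [k k0 ak] := in_sum_multiple na.
have [p [b [pp nb [s Ss Cbs]]]] := in_sum_prime_multiple k0 na ak.
have [s' Ss' s'E] := Sdiv p b s pp Ss Cbs.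
set b1 := b - s'.
have nb1 : ~ in_sum b1.
  move=> [s1 Ss1 Cs1]; apply: nb; exists (s1 + s'); first exact: subgroupD.
  by rewrite opprD addrA addrAC.
have Cb1 : C (b1 *+ p) by rewrite mulrnBl s'E.
have [c [m [Cc Sx x0]]] := maximal_adjoin nb1.
have [/dvdzP [m' mE] | ndvd] := boolP (p%:Z %| m)%Z.
  apply: x0; apply: SC Sx _; apply: (subgroupD hC Cc).
  by rewrite mE mulrC mulrzA -pmulrn; apply: subgroupMz.
apply: nb1; have /coprimezP [[u v] /= uv] := prime_coprimez_expn 1 pp ndvd.
rewrite expn1 in uv; exists ((c + b1 *~ m) *~ u); first exact: (subgroupMz hS).
rewrite {1}(mulrz_bezout b1 uv) mulrzDl (addrC (c *~ u)) opprD addrACA subrr add0r.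
by rewrite -pmulrn; apply: (subgroupB hC); apply: (subgroupMz hC).
Qed.

Lemma direct_sum_projection : (forall a, in_sum a) ->
  exists e, [/\ is_endo e, forall x, S (e x), forall x, S x -> e x = x
              & forall x, C x -> e x = 0].
Proof.
move=> full; pose e x := s2val (cid2 (full x)).
have eS x : S (e x) by rewrite /e; case: (cid2 (full x)).
have eC x : C (x - e x) by rewrite /e; case: (cid2 (full x)).
have e_uniq x s : S s -> C (x - s) -> e x = s.
  move=> Ss Cs; apply/eqP; rewrite eq_sym -subr_eq0; apply/eqP.
  apply: SC; first exact: subgroupB.
  by have := subgroupB hC (eC x) Cs; rewrite opprB addrC addrA subrK.
exists e; split=> // [x y | x Sx | x Cx]; apply: e_uniq.
- exact: subgroupB.
- by rewrite subrACA; apply: subgroupB.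
- exact: Sx.
- by rewrite subrr; apply: subgroup0.
- exact: subgroup0.
- by rewrite subr0.
Qed.

End MaximalComplement.

Lemma projection_onto S C0 :
  is_subgroup S -> is_subgroup C0 -> trivial_meet S C0 -> rel_divisible S C0 ->
  exists e, [/\ is_endo e, forall x, S (e x), forall x, S x -> e x = x
              & forall x, C0 x -> e x = 0].
Proof.
move=> hS hC0 SC0 Sdiv; have [C [hC C0C SC Cmax]] := maximal_complement hC0 SC0.
have full := in_sum_full hS hC SC Cmax (Sdiv C hC C0C SC).
have [e [he eS eid eC]] := direct_sum_projection hS hC SC full.
by exists e; split=> // x /C0C; apply: eC.
Qed.

Lemma divisible_rel_divisible S C0 :
  (forall (p : nat) s, prime p -> S s -> exists2 s', S s' & s' *+ p = s) ->
  rel_divisible S C0.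
Proof. by move=> Sdiv C _ _ _ p b s pp Ss _; apply: Sdiv. Qed.

End Projections.

Section CentralIdempotents.
Variable A : zmodType.
Hypothesis CE : End_centrally_essential A.
Implicit Types (e g : A -> A) (S : A -> Prop).

Definition idempotent e := forall x, e (e x) = e x.

(* If [a := e g (1 - e)] were nonzero, there would be central [x] and [y <> 0] with
   [a x = y], and then [y = e y = y e = a x e = a e x = 0]. *)
Lemma idempotent_corner_eq0 e g : is_endo e -> idempotent e -> is_endo g ->
  forall x, e (g (x - e x)) = 0.
Proof.
move=> he ee hg; apply: contrapT => /existsNP a_nz.
pose a x := e (g (x - e x)).
have ha : is_endo a by apply/endo_comp/endo_comp/endo_sub.
have ea x : e (a x) = a x by rewrite /a ee.
have ae x : a (e x) = 0 by rewrite /a ee subrr !endo0.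
have [x [y [xc _ yc [w yw] axy]]] := CE ha a_nz.
have {}axy z : a (x z) = y z := axy z.
apply: yw; rewrite -axy -ea axy -(central_commute yc he) -axy.
by rewrite (central_commute xc he) ae.
Qed.

Lemma idempotent_central e : is_endo e -> idempotent e -> endo_central e.
Proof.
move=> he ee; split=> // g hg x; rewrite /endo_mul.
have he' : is_endo (fun z => z - e z) by apply: endo_sub.
have ee' : idempotent (fun z => z - e z) by move=> z; rewrite he ee subrr subr0.
have := idempotent_corner_eq0 he' ee' hg (e x).
have := idempotent_corner_eq0 he ee hg x.
rewrite ee subrr subr0 hg he => /eqP; rewrite subr_eq0 => /eqP ->.
by move/eqP; rewrite subr_eq0 => /eqP.
Qed.

Lemma central_projection S C0 :
  is_subgroup S -> is_subgroup C0 -> trivial_meet S C0 -> rel_divisible S C0 ->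
  exists e, [/\ endo_central e, forall x, S (e x), forall x, S x -> e x = x
              & forall x, C0 x -> e x = 0].
Proof.
move=> hS hC0 SC0 Sdiv; have [e [he eS eid eC0]] := projection_onto hS hC0 SC0 Sdiv.
by exists e; split=> //; apply: idempotent_central => // x; apply/eid/eS.
Qed.

End CentralIdempotents.

Section Chains.
Variable A : zmodType.
Implicit Types (x y : A) (d : nat -> A).

Lemma chain_of_roots (P : A -> Prop) (k : nat -> nat) x0 :
  P x0 -> (forall N x, P x -> exists y, P y /\ y *+ k N = x) ->
  exists d, d 0%N = x0 /\ forall N, d N.+1 *+ k N = d N.
Proof.
move=> Px0 root.
pose next N (x : {x | P x}) : {x | P x} :=
  let y := cid (root N _ (svalP x)) in exist _ (sval y) (proj1 (svalP y)).
pose fix chain N := if N is N'.+1 then next N' (chain N') else exist _ x0 Px0.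
exists (fun N => sval (chain N)); split=> // N.
exact: (proj2 (svalP (cid (root N _ (svalP (chain N)))))).
Qed.

Definition chain_span d x := exists N, multiple_of (d N) x.

Section ChainSpan.
Variables (d : nat -> A) (k : nat -> nat).
Hypotheses (dk : forall N, d N.+1 *+ k N = d N) (k0 : forall N, (0 < k N)%N).

Lemma chain_mulrn N K : (N <= K)%N -> exists2 c, (0 < c)%N & d N = d K *+ c.
Proof.
move/subnK => <-; elim: (K - N)%N => [|j [c c0 IH]]; first by exists 1%N.
exists (k (j + N) * c)%N; first by rewrite muln_gt0 k0.
by rewrite IH mulrnA addSn dk.
Qed.

Lemma chain_span_from x : chain_span d x ->
  exists N, forall K, (N <= K)%N -> multiple_of (d K) x.
Proof.
move=> [N [m ->]]; exists N => K NK; have [c _ ->] := chain_mulrn NK.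
by exists (c%:Z * m); rewrite mulrzA pmulrn.
Qed.

Lemma chain_span_subgroup : is_subgroup (chain_span d).
Proof.
split; first by exists 0%N, 0.
move=> x y /chain_span_from [Nx hx] /chain_span_from [Ny hy].
exists (maxn Nx Ny); apply: (subgroupB (multiple_of_subgroup _)).
  exact/hx/leq_maxl.
exact/hy/leq_maxr.
Qed.

Lemma chain_span_torsion x : torsion (d 0%N) -> chain_span d x -> torsion x.
Proof.
move=> [n n0 dn] [N [m ->]]; have [c c0 dc] := chain_mulrn (leq0n N).
exists (c * n)%N; first by rewrite muln_gt0 c0.
by rewrite pmulrn mulrzAC -pmulrn mulrnA -dc dn mul0rz.
Qed.

Lemma chain_span_torsion_free w :
  ~ torsion (d 0%N) -> chain_span d w -> torsion w -> w = 0.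
Proof.
move=> nt [N [m ->]] [n n0 wn]; apply/eqP; apply: contraT => w0; case: nt.
have [c _ ->] := chain_mulrn (leq0n N).
have dNm : d N *~ (m * n) = 0 by rewrite mulrzA -pmulrn.
have mn0 : m * n != 0.
  by rewrite mulf_neq0 ?eqz_nat -?lt0n //; apply: contraNneq w0 => ->; rewrite mulr0z.
have [n' n'0 dn'] := torsion_mulrz dNm mn0.
by exists n' => //; rewrite mulrnAC dn' mul0rn.
Qed.

(* Writing [u], [f u] and [g u] as multiples of a single [d K] shows that the
   commutator at [u] is torsion. *)
Lemma commute_torsion_free_chain (f g : A -> A) : ~ torsion (d 0%N) ->
  is_endo f -> is_endo g ->
  (forall x, chain_span d x -> chain_span d (f x)) ->
  (forall x, chain_span d x -> chain_span d (g x)) ->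
  forall u, chain_span d u -> f (g u) = g (f u).
Proof.
move=> nt hf hg fU gU u Uu.
have [N0 h0] := chain_span_from Uu.
have [N1 h1] := chain_span_from (fU _ Uu).
have [N2 h2] := chain_span_from (gU _ Uu).
set K := maxn N0 (maxn N1 N2).
have [m0 uE] := h0 K (leq_maxl _ _).
have [m1 fuE] := h1 K (leq_trans (leq_maxl _ _) (leq_maxr _ _)).
have [m2 guE] := h2 K (leq_trans (leq_maxr _ _) (leq_maxr _ _)).
have [m00|m0n] := eqVneq m0 0; first by rewrite uE m00 mulr0z !(endo0 hf, endo0 hg).
apply/eqP; rewrite -subr_eq0; apply/eqP; apply: (chain_span_torsion_free nt).
  exact: (subgroupB (chain_span_subgroup) (fU _ (gU _ Uu)) (gU _ (fU _ Uu))).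
exact: torsion_mulrz (commutator_mulrz hf hg uE fuE guE) m0n.
Qed.

End ChainSpan.

(* Every prime divides [K.+1`!] for [K] large enough. *)
Lemma fact_chain_divisible d : (forall N, d N.+1 *+ N.+1`! = d N) ->
  forall (p : nat) s, prime p -> chain_span d s ->
  exists2 s', chain_span d s' & s' *+ p = s.
Proof.
move=> dk p _ pp [N [m ->]].
have [c _ dc] := chain_mulrn dk (fun N => fact_gt0 N.+1) (leq_addr p N).
set K := (N + p)%N in dc.
have pK : (p %| K.+1`!)%N by rewrite dvdn_fact // prime_gt0 //= leqW // leq_addl.
exists (d K.+1 *+ (K.+1`! %/ p) *+ c *~ m).
  by exists K.+1, ((K.+1`! %/ p * c)%N%:Z * m); rewrite mulrzA -pmulrn mulrnA.
by rewrite pmulrn mulrzAC -pmulrn mulrnAC -(mulrnA (d K.+1)) divnK // dk -dc.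
Qed.

End Chains.

(* [x] has order [q] and height exactly [n]: the cyclic group [Z u] is then pure and of
   exponent [q ^ n.+1]. *)
Section FiniteHeight.
Variables (A : zmodType) (q n : nat) (x u : A).
Hypotheses (qp : prime q) (xq : x *+ q = 0) (xu : x = u *+ q ^ n).
Hypothesis xh : ~ divisible_by (q ^ n.+1) x.

Lemma height_dvdz m w : x *~ m = w *+ q ^ n.+1 -> (q%:Z %| m)%Z.
Proof.
move=> xm; apply: contraT => ndvd; case: xh.
have /coprimezP [[a b] /= ab] := prime_coprimez_expn 1 qp ndvd.
exists (w *~ a); rewrite (mulrz_bezout x ab) xm expn1 -pmulrn xq mul0rz addr0.
exact: mulrnzAC.
Qed.

Lemma root_order : u *+ q ^ n.+1 = 0.
Proof. by rewrite expnSr mulrnA -xu. Qed.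

Lemma root_order_exact : u *+ q ^ n != 0.
Proof. by rewrite -xu; apply/eqP => x0; apply: xh; exists 0; rewrite x0 mul0rn. Qed.

Lemma cyclic_pure m w : u *~ m = w *+ q ^ n.+1 -> u *~ m = 0.
Proof.
move=> um; have qk k : (k <= n.+1)%N -> ((q ^ k)%N%:Z %| m)%Z.
  elim: k => [|k IH] kn; first by rewrite expn0 dvd1z.
  have /dvdzP [m' mE] := IH (ltnW kn).
  have : x *~ m' = (w *+ q ^ (n - k)) *+ q ^ n.+1.
    by rewrite xu mulrnzAC mulrnAC -um mE mulrzA -pmulrn -mulrnA -expnD subnKC.
  move/height_dvdz => /dvdzP [m'' m'E].
  by rewrite mE m'E expnS PoszM -mulrA dvdz_mull.
by case/dvdzP: (qk _ (leqnn _)) => m' ->; rewrite mulrC mulrzA -pmulrn root_order mul0rz.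
Qed.

Lemma cyclic_rel_divisible : rel_divisible (multiple_of u) (divisible_by (q ^ n.+1)).
Proof.
move=> C hC C0C SC p b _ pp [m ->] Cbs.
have [pq | pq] := eqVneq p q; first subst p.
  have Cx : C (x *~ m).
    have Cbq : C (b *+ q *+ q ^ n) by apply: C0C; exists b; rewrite -mulrnA -expnS.
    have := subgroupB hC Cbq (subgroupMn hC (q ^ n) Cbs).
    by rewrite mulrnBl opprB addrCA subrr addr0 xu mulrnzAC.
  have Sx : multiple_of u (x *~ m) by exists ((q ^ n)%N%:Z * m); rewrite xu mulrzA -pmulrn.
  have /height_dvdz /dvdzP [m' ->] : x *~ m = 0 *+ q ^ n.+1 by rewrite mul0rn; apply: SC.
  by exists (u *~ m'); [exists m' | rewrite mulrzA -pmulrn].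
have [|a ua] := @coprime_divisible _ u p _ root_order.
  by rewrite coprimeXr // prime_coprime // dvdn_prime2.
by exists (u *~ a *~ m); [exists (a * m); rewrite mulrzA | rewrite -mulrnzAC ua].
Qed.

End FiniteHeight.

Section TorsionCommute.
Variable A : zmodType.
Hypothesis CE : End_centrally_essential A.
Variables f g : A -> A.
Hypotheses (hf : is_endo f) (hg : is_endo g).

(* The roots of [t] span a Pruefer group, a divisible hence central summand, whose
   elements killed by [q ^ i.+1] are the multiples of [t]. *)
Lemma commute_divisible_primary q (t : A) i : prime q ->
  (forall z : A, primary q z -> exists w, primary q w /\ w *+ q = z) ->
  t *+ q ^ i != 0 -> t *+ q ^ i.+1 = 0 -> f (g t) = g (f t).
Proof.
move=> qp qdiv ti ti1.
have [d [d0 dq]] := chain_of_roots (k := fun=> q) (ex_intro _ i.+1 ti1) (fun=> qdiv).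
have dt N : d N *+ q ^ N = t.
  by elim: N => [|N IH]; [rewrite expn0 mulr1n | rewrite expnS mulrnA dq].
have dN0 N : d N *+ q ^ (N + i).+1 = 0 by rewrite -addnS expnD mulrnA dt.
have dNi N : d N *+ q ^ (N + i) != 0 by rewrite expnD mulrnA dt.
have Udiv : rel_divisible (chain_span d) (fun x => x = 0).
  apply: divisible_rel_divisible => p _ pp [N [m ->]].
  have [-> | pq] := eqVneq p q.
    by exists (d N.+1 *~ m); [exists N.+1, m | rewrite -mulrnzAC dq].
  have [|u du] := @coprime_divisible _ (d N) p _ (dN0 N).
    by rewrite coprimeXr // prime_coprime // dvdn_prime2.
  by exists (d N *~ u *~ m); [exists N, (u * m); rewrite mulrzA | rewrite -mulrnzAC du].
have [e [ce eU eid _]] :=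
  central_projection CE (chain_span_subgroup dq (fun=> prime_gt0 qp)) (zero_subgroup A)
    (fun x _ x0 => x0) Udiv.
have Ut : chain_span d t by exists 0%N, 1; rewrite d0 mulr1z.
have small x : chain_span d x -> x *+ q ^ i.+1 = 0 -> multiple_of t x.
  move=> [N [m ->]] xq.
  have : d N *~ (m * (q ^ i.+1)%N) = 0 by rewrite mulrzA -pmulrn.
  move/(exact_order_dvdz qp (dN0 N) (dNi N)).
  rewrite -addnS expnD PoszM dvdz_mul2r; last by rewrite eqz_nat expn_eq0 andbT -lt0n prime_gt0.
  case/dvdzP=> a ->.
  by exists a; rewrite mulrC mulrzA -pmulrn dt.
have eigen h : is_endo h -> multiple_of t (h t).
  move=> hh; apply: small; first exact: (central_image_stable ce eU eid hh Ut).
  by rewrite -endoMn // ti1 endo0.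
have [a fE] := eigen f hf; have [b gE] := eigen g hg.
exact: commute_eigen fE gE.
Qed.

(* [Z u] is a central summand; centrality forces it to contain every [q]-primary element,
   on which endomorphisms therefore act as integers. *)
Lemma commute_finite_height q n (x u : A) : prime q -> x *+ q = 0 -> x = u *+ q ^ n ->
  ~ divisible_by (q ^ n.+1) x -> forall t, primary q t -> f (g t) = g (f t).
Proof.
move=> qp xq xu xh.
have uq := root_order xq xu; have uq' := root_order_exact xu xh.
have pure : trivial_meet (multiple_of u) (divisible_by (q ^ n.+1)).
  by move=> z [m ->] [w]; apply: (cyclic_pure qp xq xu xh).
have [e [ce eS eid _]] := central_projection CE (multiple_of_subgroup u)
  (divisible_by_subgroup _ _) pure (cyclic_rel_divisible qp xq xu xh).
have he : is_endo e by case: ce.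
have Su : multiple_of u u by exists 1; rewrite mulr1z.
have e_fix z : z *+ q ^ n.+1 = 0 -> e z = z.
  move=> zq; apply: (central_fix_cyclic ce eS (eid u Su)) => m um0.
  have /dvdzP [m' ->] := exact_order_dvdz qp uq uq' um0.
  by rewrite mulrC mulrzA -pmulrn zq mul0rz.
have ker_primary y : e y = 0 -> primary q y -> y = 0.
  move=> ey [J]; elim: J y ey => [|J IH] y ey yJ; first by rewrite -[y]mulr1n -(expn0 q).
  have yq : y *+ q = 0 by apply: IH; rewrite ?(endoMn he) ?ey ?mul0rn // -mulrnA -expnS.
  by rewrite -(e_fix y) ?ey // expnS mulrnA yq mul0rn.
have tS t : primary q t -> multiple_of u t.
  move=> tq; have [m etE] := eS t.
  suff /eqP : t - e t = 0 by rewrite subr_eq0 => /eqP ->.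
  apply: ker_primary; first by rewrite he (eid _ (eS t)) subrr.
  apply: (subgroupB (@primary_subgroup A q)) => //.
  by exists n.+1; rewrite etE -mulrnzAC uq mul0rz.
move=> t /tS [m ->]; apply: (commute_mulrz hf hg).
have [a fE] := central_image_stable ce eS eid hf Su.
have [b gE] := central_image_stable ce eS eid hg Su.
exact: commute_eigen fE gE.
Qed.

Lemma commute_primary q t : prime q -> primary q t -> f (g t) = g (f t).
Proof.
move=> qp tq.
have [high | low] := pselect (forall x : A, x *+ q = 0 -> forall n, divisible_by (q ^ n) x).
  have [-> | t0] := eqVneq t 0; first by rewrite !endo0.
  have [J tJ] := tq.
  have t1 : t *+ q ^ 0 != 0 by rewrite expn0 mulr1n.
  have tJ' : ~ (t *+ q ^ J != 0) by rewrite tJ eqxx.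
  have [i [ti /negP]] := ex_last_true (P := fun i => t *+ q ^ i != 0) t1 tJ'.
  by rewrite negbK => /eqP; apply: (commute_divisible_primary qp (primary_root high) ti).
have [x [xq [n xn]]] : exists x : A, x *+ q = 0 /\ exists n, ~ divisible_by (q ^ n) x.
  apply: contrapT => none; apply: low => x xq n; apply: contrapT => xn.
  by apply: none; exists x; split => //; exists n.
have [|k [[u xu] xk]] := ex_last_true (P := fun k => divisible_by (q ^ k) x) _ xn.
  by exists x; rewrite expn0 mulr1n.
exact: commute_finite_height qp xq xu xk t tq.
Qed.

Lemma commute_torsion t : torsion t -> f (g t) = g (f t).
Proof.
apply: (torsion_primary_ind (P := fun t => f (g t) = g (f t))) => [x y fgx fgy | q x].
  by rewrite !(endoD hf, endoD hg) fgx fgy.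
exact: commute_primary.
Qed.

End TorsionCommute.

Lemma commutative_centrally_essential (A : zmodType) :
  End_commutative A -> End_centrally_essential A.
Proof.
move=> comm a ha [z az]; exists (fun x => x), a; split=> //.
- by exists (a z).
- by split=> // g hg x; apply: comm.
- by exists z.
Qed.

Section CentrallyEssential.
Variable A : zmodType.
Hypothesis CE : End_centrally_essential A.

(* For [k] of infinite order in [ker e], a second projection onto [U] may send [k] to [d];
   it cannot commute with [e]. *)
Lemma divisible_projection_kernel_torsion U e d : is_subgroup U ->
  (forall (p : nat) s, prime p -> U s -> exists2 s', U s' & s' *+ p = s) ->
  endo_central e -> (forall x, U (e x)) -> (forall x, U x -> e x = x) ->
  U d -> d != 0 -> forall k : A, e k = 0 -> torsion k.
Proof.
move=> hU Udiv ce eU eid Ud d0 k ek; apply: contrapT => nt.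
have he : is_endo e by case: ce.
have meet : trivial_meet U (multiple_of (k - d)).
  move=> z Uz [m zE].
  have Ukm : U (k *~ m).
    by rewrite -[k](subrK d) mulrzDl -zE; apply: (subgroupD hU) => //; apply: subgroupMz.
  have km : k *~ m = 0 by rewrite -(eid _ Ukm) (endoMz he) ek mul0rz.
  have [m0|m0] := eqVneq m 0; first by rewrite zE m0 mulr0z.
  by case: nt; apply: torsion_mulrz km m0.
have [e2 [ce2 _ eid2 e2C]] := central_projection CE hU (multiple_of_subgroup _) meet
  (divisible_rel_divisible Udiv).
have he2 : is_endo e2 by case: ce2.
have e2k : e2 k = d.
  have /eqP := e2C (k - d) (ex_intro _ 1 (esym (mulr1z _))).
  by rewrite he2 (eid2 d Ud) subr_eq0 => /eqP.
move/eqP: d0; apply.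
by rewrite -(eid d Ud) -e2k -(central_commute ce2 he) ek endo0.
Qed.

Lemma centrally_essential_commutative : non_reduced A -> End_commutative A.
Proof.
move=> [D [[hD Ddiv] [d [Dd d0]]]] f g hf hg a; rewrite /endo_mul.
have [c [c0 cfact]] := chain_of_roots (k := fun N => N.+1`!) Dd
  (fun N x Dx => Ddiv x N.+1`! Dx (fact_gt0 _)).
have fk N : (0 < N.+1`!)%N := fact_gt0 _.
have hU := chain_span_subgroup cfact fk.
have Udiv := fact_chain_divisible cfact.
have Ud : chain_span c d by exists 0%N, 1; rewrite c0 mulr1z.
have [e [ce eU eid _]] := central_projection CE hU (zero_subgroup A) (fun x _ x0 => x0)
  (divisible_rel_divisible Udiv).
have he : is_endo e by case: ce.
have tors : torsion (a - e a).
  apply: (divisible_projection_kernel_torsion hU Udiv ce eU eid Ud (introN eqP d0)).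
  by rewrite he (eid _ (eU a)) subrr.
have comm_ea : f (g (e a)) = g (f (e a)).
  have [dt | ndt] := pselect (torsion d).
    by apply: (commute_torsion CE hf hg); apply: (chain_span_torsion cfact fk); rewrite ?c0.
  have nt : ~ torsion (c 0%N) by rewrite c0.
  apply: (commute_torsion_free_chain cfact fk nt hf hg) (eU a).
    exact: (central_image_stable ce eU eid hf).
  exact: (central_image_stable ce eU eid hg).
rewrite -(subrK (e a) a); move: (a - e a) tors => b tb.
by rewrite !(endoD hf, endoD hg) (commute_torsion CE hf hg tb) comm_ea.
Qed.

End CentrallyEssential.

Theorem corollary2p5 (A : zmodType) :
  non_reduced A -> (End_centrally_essential A <-> End_commutative A).
Proof.
move=> nr; split=> [CE | comm]; first exact: centrally_essential_commutative.
exact: commutative_centrally_essential.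
Qed.
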